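(* Let $X\subseteq\{0,1\}^n$ be a nonempty set, let $U\subseteq\mathbb{R}^{n+1}$ be a nonempty compact set, define $f(x):=\max_{(c_0,c)\in U}\, c^\top x+c_0$ for $x\in\mathbb{R}^n$, and let $P:=\operatorname{conv}(X)$. Then Algorithm SD (described in the context) terminates after a finite number of iterations, and the point $x^k$ it outputs is a minimizer of $f$ over $P$.
   Context: For a convex function $f$, $\partial f(x)$ denotes its subdifferential at $x$. For a convex set $C$ and $x\in C$, $\mathcal{N}_C(x)=\{d\in\mathbb{R}^n: d^\top(y-x)\le 0\ \forall y\in C\}$ is the normal cone of $C$ at $x$. Algorithm SD: pick any $\hat x^0\in X$ and set $V^1=\{\hat x^0\}$. For $k=1,2,\dots$: compute (by any method) $\alpha^k\in\mathbb{R}^{V^k}_+$ with $\sum_{v\in V^k}\alpha^k_v=1$, the point $x^k=\sum_{v\in V^k}\alpha^k_v v$, and a vector $c^k\in\partial f(x^k)\cap(-\mathcal{N}_{\operatorname{conv}(V^k)}(x^k))$; then compute a minimizer $\hat x^k$ of $\min_{x\in X}(c^k)^\top x$. If $(c^k)^\top\hat x^k\ge (c^k)^\top x^k$, stop and output $x^k$; otherwise set $V^{k+1}:=V^k\cup\{\hat x^k\}$ and continue. *)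

From HB Require Import structures.
From mathcomp Require Import all_boot all_order all_algebra.
From mathcomp Require Import all_classical all_reals all_analysis.
Set Implicit Arguments. Unset Strict Implicit. Unset Printing Implicit Defensive.
Import Order.TTheory GRing.Theory Num.Theory.
Import numFieldNormedType.Exports.
Local Open Scope classical_set_scope.
Local Open Scope ring_scope.

Section Defs.
Variables (R : realType) (n : nat).
Notation vec := 'rV[R]_n.

Definition dot (c x : vec) : R := \sum_(i < n) c 0 i * x 0 i.

Definition chull (A : set vec) : set vec :=
  [set x | exists (s : seq vec) (l : vec -> R),
     [/\ {subset s <= A}, uniq s, (forall v, v \in s -> 0 <= l v),
         \sum_(v <- s) l v = 1 & x = \sum_(v <- s) l v *: v]].

Definition subdiff (f : vec -> R) (x : vec) : set vec :=
  [set g | forall y, f x + dot g (y - x) <= f y].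

Definition normal_cone (C : set vec) (x : vec) : set vec :=
  [set d | forall y, C y -> dot d (y - x) <= 0].

(* f(x) = max_{(c0,c) in U} c^T x + c0 (written as a supremum; attained
   since U is compact and nonempty). *)
Definition maxaff (U : set (R * vec)) (x : vec) : R :=
  sup [set dot p.2 x + p.1 | p in U].

Definition binary_set (X : set vec) : Prop :=
  forall x, X x -> forall i, x 0 i = 0 \/ x 0 i = 1.

End Defs.

From HB Require Import structures.
From mathcomp Require Import all_boot all_order all_algebra.
From mathcomp Require Import all_classical all_reals all_analysis.
Set Implicit Arguments. Unset Strict Implicit. Unset Printing Implicit Defensive.
Import Order.TTheory GRing.Theory Num.Theory.
Import numFieldNormedType.Exports.
Local Open Scope classical_set_scope.
Local Open Scope ring_scope.

(* Each iteration that does not stop adds a point xhat^k of X not yet in V^k: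
   since -c^k lies in the normal cone of conv(V^k) at x^k, every v in V^k has
   c^k.v >= c^k.x^k > c^k.xhat^k.  So V^k grows by a new 0/1-vector at each
   such iteration, which can happen at most 2^n times.  When the algorithm
   stops, x^k is in conv(X) and c^k.x^k <= min_X c^k.y = min_P c^k.y, so the
   subgradient inequality f(y) >= f(x^k) + c^k.(y - x^k) makes x^k optimal. *)

Section Dot.
Variables (R : realType) (n : nat).
Implicit Types (c y z : 'rV[R]_n).

Lemma dotNl c y : dot (- c) y = - dot c y.
Proof. by rewrite /dot -sumrN; apply: eq_bigr => i _; rewrite mxE mulNr. Qed.

Lemma dotBr c y z : dot c (y - z) = dot c y - dot c z.
Proof. by rewrite /dot -sumrB; apply: eq_bigr => i _; rewrite !mxE mulrBr. Qed.

Lemma dot_lincomb c (s : seq 'rV[R]_n) (l : 'rV[R]_n -> R) :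
  dot c (\sum_(v <- s) l v *: v) = \sum_(v <- s) l v * dot c v.
Proof.
rewrite /dot; under eq_bigr do rewrite summxE mulr_sumr.
rewrite exchange_big; apply: eq_bigr => v _; rewrite mulr_sumr.
by apply: eq_bigr => i _; rewrite mxE mulrCA.
Qed.

End Dot.

Section ConvexHull.
Variables (R : realType) (n : nat).
Implicit Types (A C : set 'rV[R]_n) (c x y : 'rV[R]_n).

Lemma chull_lincomb A (s : seq 'rV[R]_n) (l : 'rV[R]_n -> R) :
  (forall v, v \in s -> A v) -> (forall v, v \in s -> 0 <= l v) ->
  \sum_(v <- undup s) l v = 1 -> chull A (\sum_(v <- undup s) l v *: v).
Proof.
move=> sA l_ge0 l1; exists (undup s), l; split; rewrite ?undup_uniq //.
- by move=> v; rewrite mem_undup => /sA; apply/mem_set.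
- by move=> v; rewrite mem_undup; apply: l_ge0.
Qed.

Lemma subset_chull A : A `<=` chull A.
Proof.
move=> v Av; have := @chull_lincomb A [:: v] (fun=> 1).
by rewrite /= !big_seq1 scale1r; apply=> // w; rewrite inE => /eqP ->.
Qed.

Lemma chull_dot_ge A c m :
  (forall y, A y -> m <= dot c y) -> forall y, chull A y -> m <= dot c y.
Proof.
move=> Am _ [s [l [sA _ l_ge0 l1 ->]]]; rewrite dot_lincomb.
rewrite -[m]mul1r -l1 mulr_suml !big_seq; apply: ler_sum => v vs.
by apply: ler_wpM2l; [exact: l_ge0 | apply/Am/set_mem/sA].
Qed.

Lemma normal_cone_oppr_dot C x c y :
  normal_cone C x (- c) -> C y -> dot c x <= dot c y.
Proof. by move=> /[apply]; rewrite dotNl dotBr oppr_le0 subr_ge0. Qed.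

Lemma normal_cone_chull_notin (s : seq 'rV[R]_n) x c v :
  normal_cone (chull [set w | w \in s]) x (- c) -> dot c v < dot c x ->
  v \notin s.
Proof.
move=> cone; apply: contraTN => vs; rewrite -leNgt.
exact: normal_cone_oppr_dot cone (subset_chull vs).
Qed.

Lemma subdiff_minimizer (f : 'rV[R]_n -> R) (P : set 'rV[R]_n) x c :
  subdiff f x c -> (forall y, P y -> dot c x <= dot c y) ->
  forall y, P y -> f x <= f y.
Proof.
move=> fxc cmin y Py; apply: le_trans (fxc y).
by rewrite lerDl dotBr subr_ge0 cmin.
Qed.

End ConvexHull.

Lemma binary_uniq_size (R : realType) (n : nat) (X : set 'rV[R]_n)
    (s : seq 'rV[R]_n) :
  binary_set X -> uniq s -> (forall v, v \in s -> X v) -> (size s <= 2 ^ n)%N.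
Proof.
move=> HX s_uniq sX.
pose bits (v : 'rV[R]_n) : {ffun 'I_n -> bool} := [ffun i => v 0 i == 1].
have bits_inj : {in s &, injective bits}.
  move=> v w /sX Xv /sX Xw /ffunP bvw; apply/rowP => i; move: (bvw i).
  have ne01 : ((0 : R) == 1) = false by rewrite eq_sym oner_eq0.
  by rewrite !ffunE; case: (HX v Xv i) => ->; case: (HX w Xw i) => ->;
    rewrite ?eqxx ?ne01.
have bits_uniq : uniq (map bits s) by rewrite map_inj_in_uniq.
rewrite -(size_map bits) -(card_uniqP bits_uniq).
by rewrite (leq_trans (max_card _)) // card_ffun card_bool card_ord.
Qed.

Lemma ex_first (P : pred nat) k0 : (0 < k0)%N -> P k0 ->
  exists k, [/\ (0 < k <= k0)%N, P k & forall j, (0 < j < k)%N -> ~ P j].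
Proof.
move=> k0_gt0 Pk0.
have exP : exists k, (0 < k)%N && P k by exists k0; apply/andP.
case: (ex_minnP exP) => k /andP[k_gt0 Pk] kmin.
exists k; split=> //; first by rewrite k_gt0 kmin ?k0_gt0.
move=> j /andP[j_gt0 jk] Pj.
by move: (kmin j); rewrite j_gt0 Pj leqNgt jk => /(_ isT).
Qed.

Section Termination.
Variables (R : realType) (n : nat) (X : set 'rV[R]_n).
Variables (stop : pred nat) (V : nat -> seq 'rV[R]_n) (xhat : nat -> 'rV[R]_n).
Hypothesis HX : binary_set X.
Hypothesis X_xhat0 : X (xhat 0%N).
Hypothesis V1 : V 1%N = [:: xhat 0%N].
Hypothesis V_grow : forall k, (0 < k)%N ->
  (forall j, (0 < j < k.+1)%N -> ~ stop j) ->
  [/\ X (xhat k), xhat k \notin V k & V k.+1 = xhat k :: V k].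

Lemma V_invariant m : (0 < m)%N -> (forall j, (0 < j < m)%N -> ~ stop j) ->
  [/\ uniq (V m), size (V m) = m & forall v, v \in V m -> X v].
Proof.
elim: m => [// | [|m] IHm _ nostop].
  by rewrite V1; split=> // v; rewrite inE => /eqP ->.
have [// | | V_uniq V_size VX] := IHm.
  by move=> j /andP[j_gt0 jm]; apply: nostop; rewrite j_gt0 ltnW.
have [Xx xV ->] := V_grow (ltn0Sn m) nostop.
split=> /=; [by rewrite xV | by rewrite V_size |].
by move=> v; rewrite inE => /orP[/eqP -> | /VX].
Qed.

Lemma first_stop_within_2expn :
  exists k, [/\ (0 < k <= 2 ^ n)%N, stop k
            & forall j, (0 < j < k)%N -> ~ stop j].
Proof.
have [k0 /andP[/andP[k0_gt0 k0_le] stop_k0]] :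
    exists k, (0 < k <= 2 ^ n)%N && stop k.
  apply: contrapT => nostop.
  have [// | | V_uniq V_size VX] := @V_invariant (2 ^ n).+1.
    by move=> j jn sj; apply: nostop; exists j; rewrite jn.
  by have := binary_uniq_size HX V_uniq VX; rewrite V_size ltnn.
have [k [/andP[k_gt0 k_le] stop_k first_k]] := ex_first k0_gt0 stop_k0.
by exists k; rewrite k_gt0 (leq_trans k_le k0_le).
Qed.

End Termination.

Theorem theorem1 (R : realType) (n : nat)
  (X : set 'rV[R]_n) (U : set (R * 'rV[R]_n))
  (HX : binary_set X) (HX0 : X !=set0)
  (HU : compact U) (HU0 : U !=set0)
  (V : nat -> seq 'rV[R]_n) (alpha : nat -> 'rV[R]_n -> R)
  (x : nat -> 'rV[R]_n) (c : nat -> 'rV[R]_n) (xhat : nat -> 'rV[R]_n) :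
  let f := maxaff U in
  let P := chull X in
  let stop k := dot (c k) (x k) <= dot (c k) (xhat k) in
  X (xhat 0%N) ->
  V 1%N = [:: xhat 0%N] ->
  (forall k : nat, (1 <= k)%N -> (forall j : nat, (1 <= j < k)%N -> ~ stop j) ->
     [/\ [/\ (forall v, v \in V k -> 0 <= alpha k v),
             \sum_(v <- undup (V k)) alpha k v = 1
           & x k = \sum_(v <- undup (V k)) alpha k v *: v],
         subdiff f (x k) (c k),
         normal_cone (chull [set v | v \in V k]) (x k) (- c k),
         (X (xhat k) /\ (forall y, X y -> dot (c k) (xhat k) <= dot (c k) y))
       & (~ stop k -> V k.+1 = xhat k :: V k)]) ->
  exists k : nat, [/\ (1 <= k)%N, stop k, (forall j : nat, (1 <= j < k)%N -> ~ stop j),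
     P (x k) & forall y, P y -> f (x k) <= f y].
Proof.
move=> f P stop X_xhat0 V1 iter.
have V_grow k : (0 < k)%N -> (forall j, (0 < j < k.+1)%N -> ~ stop j) ->
    [/\ X (xhat k), xhat k \notin V k & V k.+1 = xhat k :: V k].
  move=> k_gt0 nostop.
  have nostop_k : ~ stop k by apply: nostop; rewrite k_gt0 ltnSn.
  have [|_ _ cone [Xx _] grow] := iter k k_gt0.
    by move=> j /andP[j_gt0 jk]; apply: nostop; rewrite j_gt0 ltnS ltnW.
  by split; [| apply: normal_cone_chull_notin cone _; rewrite ltNge; apply/negP | exact: grow].
have [k [/andP[k_gt0 _] stop_k first_k]] :=
  first_stop_within_2expn HX X_xhat0 V1 V_grow.
have [[alpha_ge0 alpha1 x_def] subgrad _ [_ xhat_min] _] := iter k k_gt0 first_k.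
have [_ _ VX] := V_invariant X_xhat0 V1 V_grow k_gt0 first_k.
exists k; split=> //.
  by rewrite x_def; exact: chull_lincomb VX alpha_ge0 alpha1.
apply: subdiff_minimizer subgrad _ => y; apply: chull_dot_ge => z Xz.
by rewrite (le_trans stop_k) ?xhat_min.
Qed.
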